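(* Let $n\in\mathbb{N}$ and let $q$ be a natural number with $q\ge n(n-1)/2$. Then the complete graph $K_n$ can be embedded in any projective plane of order $q$.
   Context: A finite projective plane of order $q$ has $q^2+q+1$ points and lines, $q+1$ points on each line and $q+1$ lines through each point; any two distinct points lie on a unique line and any two lines meet in a unique point. An embedding of a simple graph $G=(V,E)$ into a projective plane is an injective map $\phi$ from $V$ to the points such that the induced map sending an edge $ab$ to the line through $\phi(a),\phi(b)$ is injective on $E$. *)

From mathcomp Require Import all_boot.
Set Implicit Arguments. Unset Strict Implicit. Unset Printing Implicit Defensive.

Definition projective_plane (q : nat) (P L : finType) (I : P -> L -> bool) : Prop :=
  [/\ #|P| = q ^ 2 + q + 1 /\ #|L| = q ^ 2 + q + 1,
      (forall l : L, #|[set x | I x l]| = q.+1),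
      (forall x : P, #|[set l | I x l]| = q.+1),
      (forall x y : P, x != y -> exists! l : L, I x l && I y l)
    & (forall l m : L, l != m -> exists! x : P, I x l && I x m)].

Definition line_through (P L : finType) (I : P -> L -> bool) (x y : P) : option L :=
  [pick l | I x l && I y l].

Definition simple_graph (V : finType) (e : rel V) : Prop :=
  symmetric e /\ irreflexive e.

(* Embedding of the graph (V,e) into the plane (P,L,I): an injective vertex map
   phi such that the induced map edge {a,b} |-> line through phi a, phi b
   is injective on the edge set. *)
Definition embedding (V : finType) (e : rel V) (P L : finType)
    (I : P -> L -> bool) (phi : V -> P) : Prop :=
  injective phi /\
  (forall a b c d : V, e a b -> e c d ->
     line_through I (phi a) (phi b) = line_through I (phi c) (phi d) ->
     (a = c /\ b = d) \/ (a = d /\ b = c)).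

Definition complete_rel (n : nat) : rel 'I_n := fun i j => i != j.

(* Choose the images of the vertices greedily so that no three of them are
   collinear (a k-arc).  The points that cannot extend a k-arc are its points
   and the points on its 'C(k, 2) secants, at most k + (q + 1) 'C(k, 2) of them;
   as long as 'C(k + 1, 2) <= q this is less than q^2 + q + 1, so the greedy
   choice succeeds up to k = n.  Distinct edges of K_n then span distinct
   secants, since a secant meets the arc in exactly two points. *)

From mathcomp Require Import all_boot zify.

Set Implicit Arguments.
Unset Strict Implicit.
Unset Printing Implicit Defensive.

Lemma card_bigcup_le (I T : finType) (D : pred I) (F : I -> {set T}) (c : nat) :
  (forall i, D i -> #|F i| <= c) -> #|\bigcup_(i | D i) F i| <= #|D| * c.
Proof.
move=> leFc; rewrite -sum_nat_const.
elim/big_ind2: _ => [| A m B k leA leB | i /leFc //]; first by rewrite cards0.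
exact: leq_trans (leq_card_setU _ _) (leq_add leA leB).
Qed.

Section Arcs.

Variables (q : nat) (P L : finType) (I : P -> L -> bool).

Definition collinear (x y z : P) : bool := [exists l, [&& I x l, I y l & I z l]].

Lemma collinearCA x y z : collinear x y z = collinear y x z.
Proof. by apply: eq_existsb => l; rewrite andbCA. Qed.

Lemma collinearAC x y z : collinear x y z = collinear x z y.
Proof. by apply: eq_existsb => l; rewrite [I y l && _]andbC. Qed.

Definition arc (s : seq P) : Prop :=
  forall x y z, x \in s -> y \in s -> z \in s ->
    x != y -> y != z -> x != z -> ~~ collinear x y z.

Definition secant_cover (s : seq P) : {set P} :=
  [set z | (z \in s) ||
     [exists x, exists y, [&& x \in s, y \in s, x != y & collinear x y z]]].

Lemma arc_cons p s : arc s -> p \notin secant_cover s -> arc (p :: s).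
Proof.
move=> arc_s; rewrite inE negb_or => /andP[_ /existsPn p_off] x y z.
have off x' y' : x' \in s -> y' \in s -> x' != y' -> ~~ collinear x' y' p.
  move=> x's y's x'y'; move/existsPn: (p_off x') => /(_ y').
  by rewrite x's y's x'y'.
rewrite !in_cons => /predU1P[-> | xs] /predU1P[-> | ys] /predU1P[-> | zs];
  rewrite ?eqxx // => xy yz xz.
- by rewrite collinearCA collinearAC off.
- by rewrite collinearAC off.
- by rewrite off.
- exact: arc_s.
Qed.

Hypothesis plane : projective_plane q I.

Lemma card_collinear x y : x != y -> #|[set z | collinear x y z]| <= q.+1.
Proof.
case: plane => _ card_line _ unique_line _ /unique_line[l [/andP[xl yl] l_uniq]].
rewrite -(card_line l); apply/subset_leq_card/subsetP => z.
rewrite !inE => /existsP[l' /and3P[xl' yl' zl']].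
by rewrite (l_uniq l') ?xl'.
Qed.

Lemma card_secant_cover_cons p s :
  #|secant_cover (p :: s)| <= #|secant_cover s| + 1 + size s * q.+1.
Proof.
pose new_secants := \bigcup_(x | (x \in s) && (x != p)) [set z | collinear x p z].
have sub_cover : secant_cover (p :: s) \subset
    secant_cover s :|: [set p] :|: new_secants.
  apply/subsetP => z; rewrite !inE.
  case/orP => [/predU1P[-> | zs] | /existsP[x /existsP[y]]].
  - by rewrite eqxx orbT.
  - by rewrite zs.
  rewrite !in_cons => /and4P[/predU1P[-> | xs] /predU1P[-> | ys] xy xyz].
  - by rewrite eqxx in xy.
  - apply/orP; right; apply/bigcupP; exists y; first by rewrite ys eq_sym.
    by rewrite inE -collinearCA.
  - apply/orP; right; apply/bigcupP; exists x; first by rewrite xs xy.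
    by rewrite inE.
  - by apply/orP; left; apply/orP; left; apply/orP; right;
      apply/existsP; exists x; apply/existsP; exists y; rewrite xs ys xy.
apply: leq_trans (subset_leq_card sub_cover) _.
apply: leq_trans (leq_card_setU _ _) (leq_add _ _).
  by apply: leq_trans (leq_card_setU _ _) _; rewrite cards1.
rewrite /new_secants; apply: leq_trans (card_bigcup_le (c := q.+1) _) _.
  by move=> x /andP[_ /card_collinear].
rewrite leq_mul2r (leq_trans _ (card_size s)) ?orbT //.
by apply/subset_leq_card/subsetP => x /andP[].
Qed.

Lemma card_secant_cover s :
  #|secant_cover s| <= size s + q.+1 * 'C(size s, 2).
Proof.
elim: s => [|p s IHs].
  suff -> : secant_cover [::] = set0 by rewrite cards0.
  by apply/setP => z; rewrite !inE; apply/existsP => -[x /existsP[y]].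
apply: leq_trans (card_secant_cover_cons p s) _.
by rewrite /= binS bin1; lia.
Qed.

Lemma secant_cover_proper s : 'C((size s).+1, 2) <= q -> #|secant_cover s| < #|P|.
Proof.
have [[-> _] _ _ _ _] := plane.
rewrite binS bin1 => small_s; have := card_secant_cover s; nia.
Qed.

Lemma exists_arc k : 'C(k, 2) <= q -> exists t : k.-tuple P, uniq t /\ arc t.
Proof.
elim: k => [_ | k IHk le_k]; first by exists [tuple]; split.
have [t [uniq_t arc_t]] := IHk (leq_trans (leq_bin2l 2 (leqnSn k)) le_k).
have [p] : exists p, p \in ~: secant_cover t.
  have := secant_cover_proper (s := t); rewrite size_tuple => /(_ le_k) small.
  by apply/card_gt0P; have := cardsC (secant_cover t); lia.
rewrite inE => p_off.
exists [tuple of p :: t]; split; last exact: arc_cons.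
by rewrite /= uniq_t andbT; apply: contra p_off; rewrite inE => ->.
Qed.

Lemma line_through_spec x y : x != y ->
  exists l, line_through I x y = Some l /\ I x l && I y l.
Proof.
rewrite /line_through; case: pickP => [l xyl | no_line] xy; first by exists l.
case: plane => _ _ _ /(_ x y xy)[l [xyl _]] _.
by rewrite no_line in xyl.
Qed.

Lemma arc_embedding (V : finType) (e : rel V) (phi : V -> P) :
  irreflexive e -> injective phi ->
  (forall a b c, a != b -> b != c -> a != c ->
     ~~ collinear (phi a) (phi b) (phi c)) ->
  embedding e I phi.
Proof.
move=> e_irr phi_inj phi_arc; split=> // a b c d ab cd.
have edge_neq u v : e u v -> u != v by apply: contraTneq => ->; rewrite e_irr.
have secant u v : e u v -> exists l, line_through I (phi u) (phi v) = Some l /\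
    I (phi u) l && I (phi v) l.
  by move=> /edge_neq; rewrite -(inj_eq phi_inj) => /line_through_spec.
have [[l [-> /andP[al bl]]] [l' [-> /andP[cl dl]]]] := (secant a b ab, secant c d cd).
move=> [eq_ll']; rewrite -eq_ll' in cl dl.
have on_secant u : I (phi u) l -> u = a \/ u = b.
  move=> ul; case: (eqVneq u a) => [-> | ua]; first by left.
  case: (eqVneq u b) => [-> | ub]; first by right.
  have := phi_arc a b u (edge_neq a b ab); rewrite eq_sym ub eq_sym ua.
  by move=> /(_ isT isT) /existsPn/(_ l); rewrite al bl ul.
have := edge_neq c d cd.
by case: (on_secant c cl) (on_secant d dl) => -> [] ->; rewrite ?eqxx; auto.
Qed.

End Arcs.

Theorem theorem2p15 (n q : nat) (P L : finType) (I : P -> L -> bool) :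
  n * (n - 1) %/ 2 <= q ->
  projective_plane q I ->
  exists phi : 'I_n -> P, embedding (@complete_rel n) I phi.
Proof.
rewrite divn2 subn1 -bin2 => le_n plane.
have [t [/tuple_uniqP tnth_inj arc_t]] := exists_arc plane le_n.
exists (tnth t); apply: (arc_embedding plane) => // [i | a b c ab bc ac].
  by rewrite /complete_rel /= eqxx.
by apply: arc_t; rewrite ?mem_tnth ?(inj_eq tnth_inj).
Qed.
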